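(* Let $\ell,m,n$ be positive integers with $\ell<n$, $m<n$, $\gcd(m,n)=1$, and let $d\in\{1,\dots,n-1\}$ be the multiplicative inverse of $m$ modulo $n$. If $\ell\ne1$ then $$\mathcal{F}[\ell,m,n]^{\overline{(\ell-1)d}}=\mathcal{F}[\ell-1,m,n],\qquad \mathcal{F}[\ell,m,n]^{\overline{0}}=\mathcal{F}[\ell-1,m,n]^{(-d)},$$ and if $\ell\ne n-1$ then $$\mathcal{F}[\ell,m,n]^{\overline{\ell d}}=\mathcal{F}[\ell+1,m,n],\qquad \mathcal{F}[\ell,m,n]^{\overline{-d}}=\mathcal{F}[\ell+1,m,n]^{(d)}.$$
   Context: For positive integers $\ell<n$, $m<n$ with $\gcd(m,n)=1$, $\mathcal{F}[\ell,m,n]:\mathbb{Z}\to\{L,R\}$ is defined by $\mathcal{F}[\ell,m,n]_i=L$ if $im\bmod n<\ell$ and $R$ if $im \bmod n\ge\ell$; it is periodic with period $n$. For a sequence $\mathcal{S}$ of period $n$ and $j\in\mathbb{Z}$: $\mathcal{S}^{(j)}$ is the $j$-th left shift, $\mathcal{S}^{(j)}_i=\mathcal{S}_{i+j}$; $\mathcal{S}^{\overline j}$ is the sequence that differs from $\mathcal{S}$ exactly at the indices $j+kn$, $k\in\mathbb{Z}$ (the symbol $L$ is swapped with $R$ there). Indices such as $-d$ and $(\ell-1)d$ are taken modulo $n$. *)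

From mathcomp Require Import all_boot all_order all_algebra.
Set Implicit Arguments. Unset Strict Implicit. Unset Printing Implicit Defensive.
Import Order.TTheory GRing.Theory Num.Theory.
Local Open Scope ring_scope.

Inductive LR := L | R.

Definition swapLR (x : LR) : LR := match x with L => R | R => L end.

Definition F (l m n : nat) (i : int) : LR :=
  if ((i * m%:Z) %% n%:Z)%Z < l%:Z then L else R.

Definition seq_shift (S : int -> LR) (j : int) : int -> LR := fun i => S (i + j).

Definition seq_flip (n : nat) (S : int -> LR) (j : int) : int -> LR :=
  fun i => if (i == j %[mod n%:Z])%Z then swapLR (S i) else S i.

(** Write [r i] for the residue [i * m mod n] that decides the letter [F[l,m,n]_i].
    Since [d] inverts [m], [i |-> r i] identifies indices modulo [n] with residues,
    [r (c * d) = c], and shifting an index by [+d] or [-d] moves its residue cyclically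
    by [+1] or [-1].  Passing from [l] to [l - 1] or [l + 1] changes exactly one residue
    class, the one with residue [l - 1] or [l]; the shifted identities compare the
    classes of residues [0] and [n - 1], where the cyclic step wraps around. *)
From Stdlib Require Import FunctionalExtensionality.
From mathcomp Require Import all_boot all_order all_algebra.
From mathcomp Require Import zify.
Import Order.TTheory GRing.Theory Num.Theory.

Local Open Scope ring_scope.

Definition residue (m n : nat) (i : int) : int := ((i * m%:Z) %% n%:Z)%Z.

Lemma F_residue (l m n : nat) (i : int) :
  F l m n i = if residue m n i < l%:Z then L else R.
Proof. by []. Qed.

Lemma modz_eq (a q x k : int) : 0 <= x -> x < k -> a = q * k + x -> (a %% k)%Z = x.
Proof. by move=> x_ge0 x_lt ->; rewrite modzMDl modz_small ?x_ge0. Qed.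

Section Residues.

Variables m n d : nat.
Hypothesis n_gt1 : (1 < n)%N.
Hypothesis md_inv : (m * d == 1 %[mod n])%N.

Local Notation r := (residue m n).

Lemma residue_ge0 (i : int) : 0 <= r i.
Proof. by apply: modz_ge0; lia. Qed.

Lemma residue_lt (i : int) : r i < n.
Proof. by apply: ltz_pmod; lia. Qed.

Lemma modz_dm : ((d%:Z * m%:Z) %% n%:Z)%Z = 1.
Proof. by rewrite -PoszM modz_nat mulnC (eqP md_inv) modn_small. Qed.

Lemma residue_mulr_inv (x : int) : r (x * d) = (x %% n)%Z.
Proof. by rewrite /residue -mulrA -modzMmr modz_dm mulr1. Qed.

Lemma eqz_mod_residue (i j : int) : (i == j %[mod n])%Z = (r i == r j).
Proof.
have r_inv (k : int) : (k %% n)%Z = (r k * d %% n)%Z.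
  by rewrite modzMml -mulrA [m%:Z * d]mulrC -modzMmr modz_dm mulr1.
apply/eqP/eqP => [ij | rij]; first by rewrite /residue -modzMml ij modzMml.
by rewrite r_inv rij -r_inv.
Qed.

Lemma residue_inv_mul (c : int) : 0 <= c -> c < n -> r (c * d) = c.
Proof. by move=> c_ge0 c_lt; rewrite residue_mulr_inv modz_small // c_ge0. Qed.

Lemma residue_addr_inv (i : int) :
  r (i + d) = if r i == n%:Z - 1 then 0 else r i + 1.
Proof.
have -> : r (i + d) = ((r i + 1) %% n)%Z.
  by rewrite /residue mulrDl -(modzDml (i * m)) -(modzDmr _ (d%:Z * m)) modz_dm.
have := residue_ge0 i; have := residue_lt i.
case: eqP => [-> | ne] lt ge0; first by apply: (@modz_eq _ 1); lia.
by rewrite modz_small //; lia.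
Qed.

Lemma residue_subr_inv (i : int) :
  r (i - d%:Z) = if r i == 0 then n%:Z - 1 else r i - 1.
Proof.
have -> : r (i - d%:Z) = ((r i - 1) %% n)%Z.
  rewrite /residue mulrBl -(modzDml (i * m)) -(modzDmr _ (- (d%:Z * m))).
  by rewrite -(modzNm (d%:Z * m)) modz_dm modzDmr.
have := residue_ge0 i; have := residue_lt i.
case: eqP => [-> | ne] lt ge0; first by apply: (@modz_eq _ (-1)); lia.
by rewrite modz_small //; lia.
Qed.

Lemma residue0 : r 0 = 0.
Proof. by rewrite /residue mul0r mod0z. Qed.

Lemma residue_opp_inv : r (- d%:Z) = n%:Z - 1.
Proof. by rewrite -[- d%:Z]add0r residue_subr_inv residue0. Qed.

Lemma seq_flip_F (l : nat) (j : int) :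
  seq_flip n (F l m n) j =
  fun i => if r i == r j then swapLR (F l m n i) else F l m n i.
Proof. by apply: functional_extensionality => i; rewrite /seq_flip eqz_mod_residue. Qed.

Ltac solve_residue_cases i :=
  move: (r i) (residue_ge0 i) (residue_lt i) => x x_ge0 x_lt;
  repeat case: ifP => //= ?; exfalso; lia.

Lemma F_flip_pred (l : nat) :
  (0 < l)%N -> (l <= n)%N -> seq_flip n (F l m n) ((l%:Z - 1) * d) = F l.-1 m n.
Proof.
move=> l_gt0 l_le; rewrite seq_flip_F residue_inv_mul; try lia.
by apply: functional_extensionality => i; rewrite !F_residue; solve_residue_cases i.
Qed.

Lemma F_flip_succ (l : nat) :
  (l < n)%N -> seq_flip n (F l m n) (l%:Z * d) = F l.+1 m n.
Proof.
move=> l_lt; rewrite seq_flip_F residue_inv_mul; try lia.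
by apply: functional_extensionality => i; rewrite !F_residue; solve_residue_cases i.
Qed.

Lemma F_flip0 (l : nat) :
  (0 < l)%N -> (l <= n)%N -> seq_flip n (F l m n) 0 = seq_shift (F l.-1 m n) (- d%:Z).
Proof.
move=> l_gt0 l_le; rewrite seq_flip_F residue0.
apply: functional_extensionality => i; rewrite /seq_shift !F_residue residue_subr_inv.
solve_residue_cases i.
Qed.

Lemma F_flip_opp (l : nat) :
  (l < n)%N -> seq_flip n (F l m n) (- d%:Z) = seq_shift (F l.+1 m n) d.
Proof.
move=> l_lt; rewrite seq_flip_F residue_opp_inv.
apply: functional_extensionality => i; rewrite /seq_shift !F_residue residue_addr_inv.
solve_residue_cases i.
Qed.

End Residues.

Theorem proposition3p1 (l m n d : nat) :
  (0 < l)%N -> (0 < m)%N -> (l < n)%N -> (m < n)%N -> coprime m n ->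
  (1 <= d <= n.-1)%N -> (m * d == 1 %[mod n])%N ->
  ((l != 1%N) ->
     seq_flip n (F l m n) ((Posz l - 1) * Posz d)%R = F l.-1 m n /\
     seq_flip n (F l m n) (0 : int) = seq_shift (F l.-1 m n) (- Posz d)%R) /\
  ((l != n.-1) ->
     seq_flip n (F l m n) (Posz l * Posz d)%R = F l.+1 m n /\
     seq_flip n (F l m n) (- Posz d)%R = seq_shift (F l.+1 m n) (Posz d)).
Proof.
move=> l_gt0 _ l_lt _ _ _ md_inv.
have n_gt1 : (1 < n)%N by lia.
split=> _; split.
- by apply: F_flip_pred; rewrite // ltnW.
- by apply: F_flip0; rewrite // ltnW.
- exact: F_flip_succ.
- exact: F_flip_opp.
Qed.
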